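(* Let $A$ be a commutative ring with unit, $X$ an alphabet, and $\star\in\mathcal{P}$. Then $(A\langle X\rangle,\star)$ is a commutative (and associative) $A$-algebra with unit $1_{X^*}$.
   Context: Conventions. $X^*$ is the free monoid on $X$, with empty word $1_{X^*}$. $A\langle X\rangle$ is the free $A$-module on $X^*$, with concatenation written by juxtaposition. $AX=\{\lambda x:\lambda\in A,\ x\in X\}$; note $0\in AX$. The class $\mathcal{P}$. $\mathcal{P}$ is the set of products $\star:A\langle X\rangle\times A\langle X\rangle\to A\langle X\rangle$ such that: (i) $\star$ is $A$-bilinear; (ii) $1_{X^*}\star w=w\star 1_{X^*}=w$ for all $w\in X^*$; (iii) for all $a,b\in X$ and $u,v\in X^*$, $au\star bv=a(u\star bv)+b(au\star v)+[a,b](u\star v)$. Here $[\cdot,\cdot]:X\times X\to AX$ is a map, extended to $AX\times AX$ by $[\lambda a,\mu b]=\lambda\mu[a,b]$, and it must satisfy $[a,b]=[b,a]$ and $[[a,b],c]=[a,[b,c]]$ for all $a,b,c\in X$. For $\lambda x\in AX$ and $P\in A\langle X\rangle$, $(\lambda x)P$ means $\lambda\, xP$. *)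

From HB Require Import structures.
From mathcomp Require Import all_boot all_algebra.
From Stdlib Require List.
From Stdlib Require Import ClassicalEpsilon.
Set Implicit Arguments. Unset Strict Implicit. Unset Printing Implicit Defensive.
Import GRing.Theory.
Local Open Scope ring_scope.

(* A<X>: the free A-module on X^* (words = seq X), i.e. finitely supported
   coefficient functions seq X -> A. *)
Section NCPoly.
Variables (A : comPzRingType) (X : Type).

Definition fsupp (f : seq X -> A) : Prop :=
  exists s : seq (seq X), forall w, ~ List.In w s -> f w = 0.

Record ncpoly := NCPoly { coef : seq X -> A; coef_fsupp : fsupp coef }.

Lemma fsupp0 : fsupp (fun _ => 0).
Proof. by exists [::]. Qed.
Definition nc0 : ncpoly := NCPoly fsupp0.

Lemma fsuppD (P Q : ncpoly) : fsupp (fun w => coef P w + coef Q w).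
Proof.
case: P Q => [f [s Hs]] [g [t Ht]] /=; exists (s ++ t) => w Hw.
rewrite Hs ?Ht ?addr0 // => H; apply: Hw; apply: List.in_or_app; tauto.
Qed.
Definition ncadd (P Q : ncpoly) : ncpoly := NCPoly (fsuppD P Q).

Lemma fsuppZ (c : A) (P : ncpoly) : fsupp (fun w => c * coef P w).
Proof. case: P => [f [s Hs]] /=; exists s => w Hw; by rewrite Hs ?mulr0. Qed.
Definition ncscale (c : A) (P : ncpoly) : ncpoly := NCPoly (fsuppZ c P).

Definition word_coef (u : seq X) : seq X -> A :=
  fun w => if excluded_middle_informative (w = u) then 1 else 0.
Lemma fsupp_word u : fsupp (word_coef u).
Proof.
exists [:: u] => w Hw; rewrite /word_coef.
case: excluded_middle_informative => // E; exfalso; apply: Hw; left; by [].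
Qed.
Definition ncword (u : seq X) : ncpoly := NCPoly (fsupp_word u).

Definition lcons_coef (x : X) (P : ncpoly) : seq X -> A :=
  fun w => match w with
           | [::] => 0
           | y :: w' => if excluded_middle_informative (y = x) then coef P w' else 0
           end.
Lemma fsupp_lcons x P : fsupp (lcons_coef x P).
Proof.
case: P => [f [s Hs]]; exists (List.map (cons x) s) => [[|y w]] Hw //=.
case: excluded_middle_informative => // E; subst y; apply: Hs => H.
by apply: Hw; apply: List.in_map.
Qed.
Definition nclcons (x : X) (P : ncpoly) : ncpoly := NCPoly (fsupp_lcons x P).

(* Elements of AX are represented by pairs (lambda, x), meaning lambda x;
   ax embeds them into A<X> (so that e.g. 0 x = 0 y). *)
Definition ax (p : A * X) : ncpoly := ncscale p.1 (ncword [:: p.2]).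

Definition brAX (br : X -> X -> A * X) (p q : A * X) : A * X :=
  let r := br p.2 q.2 in (p.1 * q.1 * r.1, r.2).

Definition inP (br : X -> X -> A * X) (star : ncpoly -> ncpoly -> ncpoly) : Prop :=
  (* (i) A-bilinearity *)
      (forall P Q R, star (ncadd P Q) R = ncadd (star P R) (star Q R)) /\
      (forall P Q R, star P (ncadd Q R) = ncadd (star P Q) (star P R)) /\
      (forall c P Q, star (ncscale c P) Q = ncscale c (star P Q)) /\
      (forall c P Q, star P (ncscale c Q) = ncscale c (star P Q)) /\
      (* (ii) unit on words *)
      (forall w, star (ncword [::]) (ncword w) = ncword w /\
                 star (ncword w) (ncword [::]) = ncword w) /\
      (* (iii) recursion *)
      (forall (a b : X) (u v : seq X),
          star (ncword (a :: u)) (ncword (b :: v)) =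
          ncadd (nclcons a (star (ncword u) (ncword (b :: v))))
            (ncadd (nclcons b (star (ncword (a :: u)) (ncword v)))
               (ncscale (br a b).1 (nclcons (br a b).2 (star (ncword u) (ncword v)))))) /\
      (forall a b, ax (br a b) = ax (br b a)) /\
      (forall a b c, ax (brAX br (br a b) (1, c)) = ax (brAX br (1, a) (br b c))).

End NCPoly.

(* Write aP for the left concatenation [nclcons a P] and, for p = lambda x in
   AX, write pP for lambda xP ([axmul p P]).  The proof has two layers.

   Linear layer (no product involved): every element of A<X> is a finite
   A-linear combination of words, so two A-linear maps agreeing on words are
   equal; the same holds for bilinear maps.  Hence it suffices to verify each
   identity on words, and identities already known on words extend to A<X>.

   Combinatorial layer: by the bilinear extension principle the recursion
   (iii) holds for aP * bQ with arbitrary P, Q.  Expanding (aP * bQ) * cR and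
   aP * (bQ * cR) twice with it gives seven terms each, which correspond to
   each other and whose inner products involve words of smaller total
   length.  Strong induction on that length, with the symmetry and the
   associativity of the bracket, yields commutativity and associativity on
   words, hence everywhere.  The unit law follows from (ii) by linearity. *)

From mathcomp Require Import all_boot all_algebra ring zify.
From Stdlib Require Import ProofIrrelevance FunctionalExtensionality ClassicalEpsilon.
Set Implicit Arguments. Unset Strict Implicit. Unset Printing Implicit Defensive.
Import GRing.Theory.
Local Open Scope ring_scope.

Section LinearLayer.
Variables (A : comPzRingType) (X : Type).
Notation NC := (ncpoly A X).
Notation W := (@ncword A X).

Lemma ncpoly_ext (P Q : NC) : (forall w, coef P w = coef Q w) -> P = Q.
Proof.
case: P Q => f Hf [g Hg] /= E.
have Efg : f = g by apply: functional_extensionality.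
by subst g; rewrite (proof_irrelevance _ Hf Hg).
Qed.

Lemma coefD (P Q : NC) w : coef (ncadd P Q) w = coef P w + coef Q w.
Proof. by []. Qed.

Lemma coefZ c (P : NC) w : coef (ncscale c P) w = c * coef P w.
Proof. by []. Qed.

Lemma ncscale0 (P : NC) : ncscale 0 P = nc0 A X.
Proof. by apply: ncpoly_ext => w; rewrite coefZ mul0r. Qed.

Lemma ncscaleD c (P Q : NC) :
  ncscale c (ncadd P Q) = ncadd (ncscale c P) (ncscale c Q).
Proof. by apply: ncpoly_ext => w; rewrite !coefD !coefZ mulrDr. Qed.

Lemma nclconsD x (P Q : NC) :
  nclcons x (ncadd P Q) = ncadd (nclcons x P) (nclcons x Q).
Proof.
apply: ncpoly_ext => [[|y w]] /=; first by rewrite addr0.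
by case: (excluded_middle_informative (y = x)); rewrite /= ?addr0.
Qed.

Lemma nclconsZ x c (P : NC) : nclcons x (ncscale c P) = ncscale c (nclcons x P).
Proof.
apply: ncpoly_ext => [[|y w]] /=; first by rewrite mulr0.
by case: (excluded_middle_informative (y = x)); rewrite /= ?mulr0.
Qed.

Lemma word_coef_eq (u : seq X) : word_coef A u u = 1.
Proof. by rewrite /word_coef; case: excluded_middle_informative. Qed.

Lemma word_coef_neq (u w : seq X) : w <> u -> word_coef A u w = 0.
Proof. by rewrite /word_coef; case: excluded_middle_informative. Qed.

Lemma nclcons_word x u : nclcons x (W u) = W (x :: u).
Proof.
apply: ncpoly_ext => -[|y w] /=; first by rewrite word_coef_neq.
destruct (excluded_middle_informative (y = x)) as [->|Nyx] => /=.
  have [->|Nwu] := excluded_middle_informative (w = u).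
    by rewrite !word_coef_eq.
  by rewrite !word_coef_neq // => -[].
by rewrite word_coef_neq // => -[].
Qed.

Lemma ncpoly_ind (Phi : NC -> Prop) : Phi (nc0 A X) ->
  (forall c u P, Phi P -> Phi (ncadd (ncscale c (W u)) P)) -> forall P, Phi P.
Proof.
move=> Phi0 PhiS P; case: (coef_fsupp P) => s.
elim: s P => [|u s IH] P Hs.
  by have -> : P = nc0 A X by apply: ncpoly_ext => w; apply: Hs.
pose f w := if excluded_middle_informative (w = u) then 0 else coef P w.
have supp_f w : ~ List.In w s -> f w = 0.
  rewrite /f; case: excluded_middle_informative => // Nwu Hw.
  by apply: Hs => -[Ewu|]; [apply: Nwu|apply: Hw].
have -> : P = ncadd (ncscale (coef P u) (W u)) (NCPoly (ex_intro _ s supp_f)).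
  apply: ncpoly_ext => w; rewrite coefD coefZ /= /f.
  have [->|Nwu] := excluded_middle_informative (w = u).
    rewrite word_coef_eq.
    by case: excluded_middle_informative => //= _; rewrite mulr1 addr0.
  rewrite word_coef_neq //.
  by case: excluded_middle_informative => //= _; rewrite mulr0 add0r.
exact/PhiS/IH.
Qed.

Definition nclinear (f : NC -> NC) : Prop :=
  (forall P Q, f (ncadd P Q) = ncadd (f P) (f Q)) /\
  (forall c P, f (ncscale c P) = ncscale c (f P)).

Lemma linear_ext (f g : NC -> NC) : nclinear f -> nclinear g ->
  (forall u, f (W u) = g (W u)) -> forall P, f P = g P.
Proof.
move=> [fD fZ] [gD gZ] Efg; elim/ncpoly_ind => [|c u P IH].
  by rewrite -(ncscale0 (nc0 A X)) fZ gZ !ncscale0.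
by rewrite fD gD fZ gZ Efg IH.
Qed.

Lemma bilinear_ext (f g : NC -> NC -> NC) :
  (forall Q, nclinear (f^~ Q)) -> (forall P, nclinear (f P)) ->
  (forall Q, nclinear (g^~ Q)) -> (forall P, nclinear (g P)) ->
  (forall u v, f (W u) (W v) = g (W u) (W v)) -> forall P Q, f P Q = g P Q.
Proof.
move=> fl fr gl gr Efg P Q; apply: (linear_ext (fl Q) (gl Q)) => u {P}.
by apply: linear_ext => // v; apply: Efg.
Qed.

(* The action pP = lambda xP of p = lambda x in AX: its coefficients only
   depend on the element ax p of A<X>, so equal elements of AX act equally. *)
Definition axmul (p : A * X) (P : NC) : NC := ncscale p.1 (nclcons p.2 P).

Lemma coef_axmul p P w : coef (axmul p P) w =
  if w is y :: w' then coef (ax p) [:: y] * coef P w' else 0.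
Proof.
case: w => [|y w] /=; first by rewrite mulr0.
destruct (excluded_middle_informative (y = p.2)) as [->|Nyx] => /=.
  by rewrite word_coef_eq !mulr1.
by rewrite word_coef_neq ?mulr0 ?mul0r // => -[].
Qed.

Lemma axmul_congr p q : ax p = ax q -> forall P, axmul p P = axmul q P.
Proof. by move=> Epq P; apply: ncpoly_ext => w; rewrite !coef_axmul Epq. Qed.

Lemma axmulD p (P Q : NC) : axmul p (ncadd P Q) = ncadd (axmul p P) (axmul p Q).
Proof. by rewrite /axmul nclconsD ncscaleD. Qed.

Lemma axmulZ p c (P : NC) : axmul p (ncscale c P) = ncscale c (axmul p P).
Proof.
by rewrite /axmul nclconsZ; apply: ncpoly_ext => w; rewrite !coefZ mulrCA.
Qed.

End LinearLayer.

Section ProductLaws.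
Variables (A : comPzRingType) (X : Type).
Notation NC := (ncpoly A X).
Notation W := (@ncword A X).
Variables (br : X -> X -> A * X) (star : NC -> NC -> NC).
Hypothesis star_inP : inP br star.

Declare Scope nc_scope.
Delimit Scope nc_scope with NC.
Local Notation "P + Q" := (ncadd P Q) : nc_scope.
Local Notation "P * Q" := (star P Q) : nc_scope.
Local Notation "a ▹ P" := (nclcons a P) (at level 35, right associativity) : nc_scope.
Local Notation "p ⊳ P" := (axmul p P) (at level 35, right associativity) : nc_scope.

Lemma starDl P Q R : star (ncadd P Q) R = ncadd (star P R) (star Q R).
Proof. by case: star_inP. Qed.

Lemma starDr P Q R : star P (ncadd Q R) = ncadd (star P Q) (star P R).
Proof. by case: star_inP => _ []. Qed.

Lemma starZl c P Q : star (ncscale c P) Q = ncscale c (star P Q).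
Proof. by case: star_inP => _ [] _ []. Qed.

Lemma starZr c P Q : star P (ncscale c Q) = ncscale c (star P Q).
Proof. by case: star_inP => _ [] _ [] _ []. Qed.

Lemma star_unit_word w : star (W [::]) (W w) = W w /\ star (W w) (W [::]) = W w.
Proof. by case: star_inP => _ [] _ [] _ [] _ [] H _; apply: H. Qed.

Lemma star_word_cons a b u v : (W (a :: u) * W (b :: v) =
  a ▹ (W u * W (b :: v)) + (b ▹ (W (a :: u) * W v) + br a b ⊳ (W u * W v)))%NC.
Proof. by case: star_inP => _ [] _ [] _ [] _ [] _ [] H _; apply: H. Qed.

Lemma bracket_sym a b P : axmul (br a b) P = axmul (br b a) P.
Proof. by apply: axmul_congr; case: star_inP => _ [] _ [] _ [] _ [] _ [] _ []. Qed.

Lemma bracket_assoc a b c P :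
  axmul (brAX br (br a b) (1, c)) P = axmul (brAX br (1, a) (br b c)) P.
Proof. by apply: axmul_congr; case: star_inP => _ [] _ [] _ [] _ [] _ [] _ []. Qed.

Ltac ncnorm := rewrite ?(starDl, starDr, starZl, starZr,
  nclconsD, nclconsZ, axmulD, axmulZ, ncscaleD).
Ltac ncsolve := apply: ncpoly_ext => ?; rewrite ?(coefD, coefZ) /=; ring.
Ltac nclinear_tac := split => *; ncnorm; ncsolve.

Lemma star_unit_l P : star (W [::]) P = P.
Proof.
apply: (linear_ext (f := star (W [::])) (g := id)) => [||u]; try by nclinear_tac.
exact: (star_unit_word u).1.
Qed.

Lemma star_unit_r P : star P (W [::]) = P.
Proof.
apply: (linear_ext (f := star^~ (W [::])) (g := id)) => [||u]; try by nclinear_tac.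
exact: (star_unit_word u).2.
Qed.

(* Commutativity on words, by induction on the total length: both sides
   expand by rule (iii) into corresponding shorter products, the bracket
   terms agreeing by symmetry of the bracket. *)
Lemma star_comm_word n u v : (size u + size v < n)%N ->
  star (W u) (W v) = star (W v) (W u).
Proof.
elim: n u v => [//|n IH] [|a u] [|b v] /= Hn;
  rewrite ?(star_unit_word _).1 ?(star_unit_word _).2 //.
rewrite !star_word_cons bracket_sym (IH u (b :: v)) ?(IH (a :: u) v) ?(IH u v) /=;
  try lia.
by ncsolve.
Qed.

Lemma star_comm P Q : star P Q = star Q P.
Proof.
move: P Q; apply: (bilinear_ext (g := fun P Q => star Q P)) => [Q|P|Q|P|u v];
  try by nclinear_tac.
exact: (star_comm_word (n := (size u + size v).+1)).
Qed.

(* Rule (iii) for arbitrary P, Q: both sides are bilinear in (P, Q). *)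
Lemma star_lcons a b P Q : (a ▹ P * b ▹ Q =
  a ▹ (P * b ▹ Q) + (b ▹ (a ▹ P * Q) + br a b ⊳ (P * Q)))%NC.
Proof.
move: P Q; apply: bilinear_ext => [Q|P|Q|P|u v]; try by nclinear_tac.
by rewrite !nclcons_word star_word_cons.
Qed.

Lemma star_expand_l a b c P Q R : (a ▹ P * b ▹ Q * c ▹ R =
  a ▹ (P * b ▹ Q * c ▹ R) + b ▹ (a ▹ P * Q * c ▹ R) + c ▹ (a ▹ P * b ▹ Q * R)
  + br a c ⊳ (P * b ▹ Q * R) + br b c ⊳ (a ▹ P * Q * R)
  + br a b ⊳ (P * Q * c ▹ R) + brAX br (br a b) (1, c) ⊳ (P * Q * R))%NC.
Proof.
rewrite [(a ▹ P * b ▹ Q)%NC]star_lcons; ncnorm.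
rewrite !star_lcons; ncnorm.
by ncsolve.
Qed.

Lemma star_expand_r a b c P Q R : (a ▹ P * (b ▹ Q * c ▹ R) =
  a ▹ (P * (b ▹ Q * c ▹ R)) + b ▹ (a ▹ P * (Q * c ▹ R)) + c ▹ (a ▹ P * (b ▹ Q * R))
  + br a c ⊳ (P * (b ▹ Q * R)) + br b c ⊳ (a ▹ P * (Q * R))
  + br a b ⊳ (P * (Q * c ▹ R)) + brAX br (1, a) (br b c) ⊳ (P * (Q * R)))%NC.
Proof.
rewrite [(b ▹ Q * c ▹ R)%NC]star_lcons; ncnorm.
rewrite !star_lcons; ncnorm.
by ncsolve.
Qed.

(* Associativity on words, by induction on the total length: the two
   seven-term expansions match term by term, the inner products being
   shorter, and the last terms agree by associativity of the bracket. *)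
Lemma star_assoc_word n u v w : (size u + size v + size w < n)%N ->
  star (star (W u) (W v)) (W w) = star (W u) (star (W v) (W w)).
Proof.
elim: n u v w => [//|n IH] [|a u] [|b v] [|c w] /= Hn;
  rewrite ?star_unit_l ?star_unit_r //.
rewrite -!nclcons_word star_expand_l star_expand_r !nclcons_word bracket_assoc.
by rewrite !IH //=; lia.
Qed.

(* Associativity extends to A<X>: linearity in R reduces to R a word,
   bilinearity in (P, Q) then reduces to three words. *)
Lemma star_assoc P Q R : star (star P Q) R = star P (star Q R).
Proof.
move: R; apply: (linear_ext (f := star (star P Q)) (g := fun R => star P (star Q R)))
  => [||w]; try by nclinear_tac.
move: P Q; apply: (bilinear_ext (f := fun P Q => star (star P Q) (W w))
                                (g := fun P Q => star P (star Q (W w))))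
  => [Q|P|Q|P|u v]; try by nclinear_tac.
exact: (star_assoc_word (n := (size u + size v + size w).+1)).
Qed.

End ProductLaws.

Theorem mainTheorem2 (A : comPzRingType) (X : Type)
    (star : ncpoly A X -> ncpoly A X -> ncpoly A X) :
  (exists br : X -> X -> A * X, inP br star) ->
  [/\ (forall P Q, star P Q = star Q P),
      (forall P Q R, star (star P Q) R = star P (star Q R)) &
      (forall P, star (ncword A [::]) P = P /\ star P (ncword A [::]) = P)].
Proof.
case=> br star_inP; split.
- exact: star_comm star_inP.
- exact: star_assoc star_inP.
- by move=> P; rewrite (star_unit_l star_inP) (star_unit_r star_inP).
Qed.
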